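(* Let $\Omega\subset B(\mathcal H)^d$ be an NC domain and $f:\Omega\to B(\mathcal H)^r$ an NC function. Suppose $x\in\Omega$, $h\in B(\mathcal H)^d$, and $s:\mathcal H\to\mathcal H^{(2)}$ is a bounded invertible linear map such that $s^{-1}\begin{bmatrix}x&h\\0&x\end{bmatrix}s\in\Omega$. Then $$f\left(s^{-1}\begin{bmatrix}x&h\\0&x\end{bmatrix}s\right)=s^{-1}\begin{bmatrix}f(x)&Df(x)[h]\\0&f(x)\end{bmatrix}s.$$
   Context: Throughout, $\mathcal H$ is an infinite-dimensional separable complex Hilbert space, $B(\mathcal H)$ the bounded operators with the operator norm, and $\mathcal H^{(l)}$ ($l\in\mathbb N\cup\{\infty\}$) the direct sum of $l$ copies of $\mathcal H$. $B(\mathcal H)^d$ has the norm $\|x\|=\max_i\|x^i\|$. Operations on tuples are componentwise: for bounded invertible linear $s:\mathcal H\to\mathcal H^{(l)}$ and $z\in B(\mathcal H^{(l)})^d$, $s^{-1}zs=(s^{-1}z^1s,\dots,s^{-1}z^ds)$; for a finite or countable uniformly bounded sequence $x_1,x_2,\dots$ in $B(\mathcal H)^d$ of length $l$, $\bigoplus_n x_n\in B(\mathcal H^{(l)})^d$ has $i$-th entry $\bigoplus_n x_n^i$; a block matrix $\begin{bmatrix}x&h\\0&y\end{bmatrix}$ with $x,h,y\in B(\mathcal H)^d$ is the element of $B(\mathcal H^{(2)})^d$ with $i$-th entry $\begin{bmatrix}x^i&h^i\\0&y^i\end{bmatrix}$. A set is unitarily invariant if $u^*xu$ lies in it for each of its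 elements $x$ and each unitary $u\in B(\mathcal H)$. NC domain: $\Omega\subset B(\mathcal H)^d$ is an NC domain if there are subsets $\Omega_1,\Omega_2,\dots$ of $\Omega$ with (1) $\Omega_k\subset\mathrm{int}\,\Omega_{k+1}$ (norm interior) and $\Omega=\bigcup_k\Omega_k$; (2) each $\Omega_k$ norm-bounded and unitarily invariant; (3) for every sequence $x_1,x_2,\dots$ in $\Omega_k$ of length $l\in\mathbb N\cup\{\infty\}$ there is a unitary $u:\mathcal H\to\mathcal H^{(l)}$ with $u^{-1}(\bigoplus_n x_n)u\in\Omega_k$. NC function: $f:\Omega\to B(\mathcal H)^r$ on an NC domain is NC if whenever $x,y\in\Omega$ and $s:\mathcal H\to\mathcal H^{(2)}$ is bounded, linear, invertible with $s^{-1}\begin{bmatrix}x&0\\0&y\end{bmatrix}s\in\Omega$, then $f\Big(s^{-1}\begin{bmatrix}x&0\\0&y\end{bmatrix}s\Big)=s^{-1}\begin{bmatrix}f(x)&0\\0&f(y)\end{bmatrix}s$. Every NC function is Fréchet differentiable; $Df(x)[h]$ denotes its Fréchet derivative at $x$ applied to $h$. *)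

From HB Require Import structures.
From mathcomp Require Import all_boot all_order all_algebra.
From mathcomp Require Import complex.
From mathcomp Require Import all_classical all_reals all_analysis.
Import numFieldNormedType.Exports.
Import GRing.Theory Num.Theory.

Set Implicit Arguments.
Unset Strict Implicit.
Unset Printing Implicit Defensive.

Local Open Scope ring_scope.
Local Open Scope classical_set_scope.

Section NCDefs.
Context {R : realType}.
Local Notation C := R[i].
Context (H : normedModType C).

Definition series_to (u : nat -> C) (L : C) : Prop :=
  series u @ \oo --> (L : Num.ClosedField.sort _).

Definition inner_product (ip : H -> H -> C) : Prop :=
  (forall (a : C) (u v w : H), ip (a *: u + v) w = a * ip u w + ip v w) /\
  (forall u v : H, ip u v = (ip v u)^*) /\
  (forall v : H, ip v v = `|v| ^+ 2).

Definition separable_space : Prop :=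
  exists D : nat -> H, forall (v : H) (e : C), 0 < e -> exists n, `|v - D n| < e.

Definition infinite_dimensional (ip : H -> H -> C) : Prop :=
  forall n : nat, exists e : 'I_n -> H,
    forall i j, ip (e i) (e j) = (i == j)%:R.

Definition linop (T : H -> H) : Prop :=
  forall (a : C) (u v : H), T (a *: u + v) = a *: T u + T v.

Definition bounded_op (T : H -> H) : Prop :=
  linop T /\ exists M : C, 0 <= M /\ forall v, `|T v| <= M * `|v|.

Definition tup (d : nat) := 'I_d -> H -> H.

Definition btup d (x : tup d) : Prop := forall i, bounded_op (x i).

(* ||x|| <= M for the norm max_i ||x^i||  (operator norm) *)
Definition tnorm_le d (x : tup d) (M : C) : Prop :=
  forall i v, `|x i v| <= M * `|v|.

Definition tadd d (x y : tup d) : tup d := fun i v => x i v + y i v.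
Definition tsub d (x y : tup d) : tup d := fun i v => x i v - y i v.
Definition tscale d (a : C) (x : tup d) : tup d := fun i v => a *: x i v.
Definition tzero d : tup d := fun _ _ => 0.

Definition norm_interior d (A : set (tup d)) : set (tup d) :=
  fun x => btup x /\ exists e : C, 0 < e /\
    forall y, btup y -> tnorm_le (tsub y x) e -> A y.

Definition norm_bounded d (A : set (tup d)) : Prop :=
  exists M : C, forall x, A x -> tnorm_le x M.

(* unitaries u : H -> H (for a unitary, u^* = u^{-1}) *)
Definition unitary (u : H -> H) : Prop :=
  linop u /\ (forall v, `|u v| = `|v|) /\ (forall y, exists v, u v = y).

Definition unitarily_invariant d (A : set (tup d)) : Prop :=
  forall x u w, A x -> unitary u -> (forall v, w (u v) = v) ->
    A (fun i v => w (x i (u v))).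

(* lengths: Some m encodes l = m+1 (finite), None encodes l = oo.
   H^(l) is realised as sequences nat -> H vanishing off the index set,
   with square-summable norms. *)
Definition idx (l : option nat) (n : nat) : bool :=
  if l is Some m then (n < m.+1)%N else true.

Definition in_Hl (l : option nat) (z : nat -> H) : Prop :=
  (forall n, ~~ idx l n -> z n = 0) /\
  exists L : C, series_to (fun n => `|z n| ^+ 2) L.

Definition unitary_l (l : option nat) (u : H -> nat -> H) : Prop :=
  (forall (a : C) v w, u (a *: v + w) = (fun n => a *: u v n + u w n)) /\
  (forall v, in_Hl l (u v)) /\
  (forall v, series_to (fun n => `|u v n| ^+ 2) (`|v| ^+ 2)) /\
  (forall z, in_Hl l z -> exists v, u v = z).

Definition dsum d (l : option nat) (x : nat -> tup d) (i : 'I_d) (z : nat -> H)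
  : nat -> H := fun n => if idx l n then x n i (z n) else 0.

Definition nc_domain d (Om : set (tup d)) : Prop :=
  (forall x, Om x -> btup x) /\
  exists Omk : nat -> set (tup d),
    (forall k, Omk k `<=` Om) /\
    (Om = \bigcup_k Omk k) /\
    (forall k, Omk k `<=` norm_interior (Omk k.+1)) /\
    (forall k, norm_bounded (Omk k)) /\
    (forall k, unitarily_invariant (Omk k)) /\
    (forall k (l : option nat) (x : nat -> tup d),
        (forall n, idx l n -> Omk k (x n)) ->
        exists (u : H -> nat -> H) (w : (nat -> H) -> H),
          unitary_l l u /\ (forall v, w (u v) = v) /\
          (forall z, in_Hl l z -> u (w z) = z) /\
          Omk k (fun i v => w (dsum l x i (u v)))).

Definition sq2 (p : H * H) : C := `|p.1| ^+ 2 + `|p.2| ^+ 2.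

Definition binv2 (s : H -> H * H) (t : H * H -> H) : Prop :=
  (forall (a : C) u v, s (a *: u + v) = a *: s u + s v) /\
  (exists M : C, forall v, sq2 (s v) <= M ^+ 2 * `|v| ^+ 2) /\
  (forall (a : C) p q, t (a *: p + q) = a *: t p + t q) /\
  (exists M : C, forall p, `|t p| ^+ 2 <= M ^+ 2 * sq2 p) /\
  (forall v, t (s v) = v) /\ (forall p, s (t p) = p).

(* the block upper-triangular tuple [[x, h], [0, y]] in B(H^(2))^d *)
Definition blk d (x h y : tup d) (i : 'I_d) (p : H * H) : H * H :=
  (x i p.1 + h i p.2, y i p.2).

(* s^{-1} z s, with t = s^{-1} *)
Definition conj2 d (s : H -> H * H) (t : H * H -> H) (z : 'I_d -> H * H -> H * H)
  : tup d := fun i v => t (z i (s v)).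

Definition nc_function d r (Om : set (tup d)) (f : tup d -> tup r) : Prop :=
  forall x y s t, Om x -> Om y -> binv2 s t ->
    Om (conj2 s t (blk x (@tzero d) y)) ->
    f (conj2 s t (blk x (@tzero d) y)) = conj2 s t (blk (f x) (@tzero r) (f y)).

Definition frechet_deriv d r (Om : set (tup d)) (f : tup d -> tup r)
    (x : tup d) (L : tup d -> tup r) : Prop :=
  (forall h, btup h -> btup (L h)) /\
  (forall (a : C) h k, btup h -> btup k ->
       L (tadd (tscale a h) k) = tadd (tscale a (L h)) (L k)) /\
  (exists M : C, forall h c, btup h -> tnorm_le h c -> tnorm_le (L h) (M * c)) /\
  (forall e : C, 0 < e -> exists del : C, 0 < del /\
     forall k, btup k -> Om (tadd x k) ->
       forall c : C, 0 <= c -> c < del -> tnorm_le k c ->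
         tnorm_le (tsub (tsub (f (tadd x k)) (f x)) (L k)) (e * c)).

End NCDefs.

From HB Require Import structures.
From mathcomp Require Import all_boot all_order all_algebra.
From mathcomp Require Import complex.
From mathcomp Require Import all_classical all_reals all_analysis.
From mathcomp Require Import ring.
Import numFieldNormedType.Exports.
Import Order.TTheory GRing.Theory Num.Theory.
Local Open Scope ring_scope.
Local Open Scope classical_set_scope.
Local Open Scope complex_scope.

(* Conjugating by the similarity [[1, S], [0, 1]] turns the NC property into the identity
   f [[A, A S - S B], [0, B]] = [[f A, f(A) S - S f(B)], [0, f B]] (up to the similarity s).
   With S = 1/tau and A = x + tau h, B = x, the left-hand side is f at
   Y_tau = s^-1 [[x + tau h, h], [0, x]] s, and the right-hand side has the difference
   quotient of f in its corner, which tends to Df(x)[h] as tau -> 0.  It remains to see that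
   f(Y_tau) -> f(Y_0): the same identity with S = lambda, A = Y', B = Y shows that
   lambda (f Y' - f Y) is a corner of f at a point near Y (+) Y when lambda |Y' - Y| is small,
   so f is locally Lipschitz as soon as it is locally bounded.  Local boundedness on a level
   Omega_k comes from infinite direct sums: the isometric embedding of H as the n-th summand
   intertwines the direct sum Z of a sequence z_n in Omega_k with z_n, hence f Z with f z_n,
   so |f z_n| <= |f Z| for all n. *)

Section Scalars.
Context {R : realType}.
Local Notation C := R[i].

Lemma ge0_Creal {x : C} : 0 <= x -> exists2 y : R, 0 <= y & x = y%:C.
Proof.
move=> x0; exists (complex.Re x); last by rewrite RRe_real // ger0_real.
by rewrite -ler0c RRe_real // ger0_real.
Qed.

Lemma near_inv_mul_lt {A B : C} : 0 <= A -> 0 < B ->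
  \forall m \near \oo, (m.+1%:R)^-1 * A < B.
Proof.
move=> /ge0_Creal[a a0 ->] B0; have [b _ eB] := ge0_Creal (ltW B0).
move: B0; rewrite eB ltcR => b0.
exists (Num.Def.archi_bound (a / b)) => // m /= le_m.
have ab_lt : a / b < m.+1%:R.
  apply: lt_le_trans (archi_boundP _) _; first by rewrite divr_ge0 // ltW.
  by rewrite ler_nat ltnW.
rewrite -(rmorph_nat (@complex.real_complex R)) -fmorphV -rmorphM ltcR.
by rewrite mulrC ltr_pdivrMr ?ltr0Sn // -ltr_pdivrMl // mulrC.
Qed.

Lemma eq0_of_le_inv (a K : C) : 0 <= a -> 0 <= K ->
  (forall m : nat, a <= (m.+1%:R)^-1 * K) -> a = 0.
Proof.
move=> a0 K0 le_a; apply/eqP/negPn/negP => a_neq0.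
have a_gt0 : 0 < a by rewrite lt0r a_neq0.
have [m /=] := filter_ex (near_inv_mul_lt K0 a_gt0).
by rewrite le_gtF.
Qed.

Lemma le_normM_of_sqr (x y z M : C) : 0 <= x -> 0 <= y -> 0 <= z ->
  z <= y ^+ 2 -> x ^+ 2 <= M ^+ 2 * z -> x <= `|M| * y.
Proof.
move=> x0 y0 z0 le_z le_x; rewrite -(@ler_pXn2r _ 2) ?nnegrE ?mulr_ge0 //.
apply: (le_trans le_x); have Mz0 : 0 <= M ^+ 2 * z := le_trans (exprn_ge0 2 x0) le_x.
rewrite -[M ^+ 2 * z]ger0_norm // normrM normrX (ger0_norm z0) exprMn.
by rewrite ler_wpM2l ?exprn_ge0.
Qed.

Lemma sqrrD_le {a b : C} : 0 <= a -> 0 <= b -> (a + b) ^+ 2 <= 2 * (a ^+ 2 + b ^+ 2).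
Proof.
move=> a0 b0; rewrite -subr_ge0.
have -> : 2 * (a ^+ 2 + b ^+ 2) - (a + b) ^+ 2 = (a - b) ^+ 2 by ring.
by rewrite -realEsqr rpredB ?ger0_real.
Qed.

Lemma exists_nat_ge {x : C} : 0 <= x -> exists n : nat, x <= n%:R.
Proof.
move=> /ge0_Creal[y y0 ->]; exists (Num.Def.archi_bound y).
by rewrite -(rmorph_nat (@complex.real_complex R)) lecR ltW // archi_boundP.
Qed.

Lemma series_to_eventually0 (u : nat -> C) N : (forall n, (N <= n)%N -> u n = 0) ->
  series_to u (\sum_(0 <= k < N) u k).
Proof.
move=> u0 A /nbhs_singleton A_sum; exists N => // n /= le_Nn.
rewrite /series /= (big_cat_nat _ le_Nn) //= [X in _ + X]big1_seq ?addr0 // => k.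
by rewrite mem_index_iota => /andP[_ /andP[/u0]].
Qed.

Lemma series_to_unique (u : nat -> C) L1 L2 : series_to u L1 -> series_to u L2 -> L1 = L2.
Proof. by move=> /(cvg_lim (@norm_hausdorff _ C^o)) <- /(cvg_lim (@norm_hausdorff _ C^o)). Qed.

End Scalars.

Section LinearLaw.
Context {R : realType} {U V : lmodType R[i]} {g : U -> V}.
Hypothesis g_lin : forall (a : R[i]) u v, g (a *: u + v) = a *: g u + g v.

Lemma linlawD u v : g (u + v) = g u + g v.
Proof. by move: (g_lin 1 u v); rewrite !scale1r. Qed.

Lemma linlawB u v : g (u - v) = g u - g v.
Proof. by rewrite addrC -scaleN1r g_lin scaleN1r addrC. Qed.

Lemma linlaw0 : g 0 = 0.
Proof. by rewrite -(subrr 0) linlawB subrr. Qed.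

Lemma linlawZ a u : g (a *: u) = a *: g u.
Proof. by move: (g_lin a u 0); rewrite addr0 linlaw0 addr0. Qed.

End LinearLaw.

Section Operators.
Context {R : realType} {H : normedModType R[i]}.
Local Notation C := R[i].

Lemma btup_linop {d} {x : tup H d} i : btup x -> linop (x i).
Proof. by move=> /(_ i) []. Qed.

Lemma btup_bound {d} {x : tup H d} : btup x -> exists2 c : C, 0 < c & tnorm_le x c.
Proof.
move=> hx.
have /choice[M hM] : forall i, exists M : C, 0 <= M /\ forall v, `|x i v| <= M * `|v|.
  by move=> i; have [_ [M hM]] := hx i; exists M.
have M0 i : 0 <= M i by case: (hM i).
exists (\sum_i M i + 1) => [|i v]; first by rewrite (lt_le_trans ltr01) // lerDr sumr_ge0.
apply: le_trans (proj2 (hM i) v) _; rewrite ler_wpM2r //.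
by rewrite (bigD1 i) //= -addrA lerDl addr_ge0 ?sumr_ge0.
Qed.

Lemma btupD {d} {a b : tup H d} : btup a -> btup b -> btup (tadd a b).
Proof.
move=> ha hb; have [ca ca0 hca] := btup_bound ha; have [cb cb0 hcb] := btup_bound hb.
move=> i; split=> [g u v|].
  by rewrite /tadd (btup_linop i ha) (btup_linop i hb) scalerDr addrACA.
exists (ca + cb); split=> [|v]; first by rewrite addr_ge0 ?ltW.
by rewrite mulrDl (le_trans (ler_normD _ _)) ?lerD.
Qed.

Lemma btupZ {d} (c : C) {a : tup H d} : btup a -> btup (tscale c a).
Proof.
move=> ha; have [ca ca0 hca] := btup_bound ha.
move=> i; split=> [g u v|].
  by rewrite /tscale (btup_linop i ha) scalerDr !scalerA mulrC.
exists (`|c| * ca); split=> [|v]; first by rewrite mulr_ge0 ?normr_ge0 ?ltW.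
by rewrite /tscale normrZ -mulrA ler_wpM2l.
Qed.

Lemma btupB {d} {a b : tup H d} : btup a -> btup b -> btup (tsub a b).
Proof.
move=> ha hb; have -> : tsub a b = tadd a (tscale (-1) b).
  by apply/funext=> i; apply/funext=> v; rewrite /tadd /tscale scaleN1r.
by apply: btupD => //; apply: btupZ.
Qed.

Lemma tnorm_le_trans {d} {x : tup H d} {a b : C} : tnorm_le x a -> a <= b -> tnorm_le x b.
Proof. by move=> hx ab i v; rewrite (le_trans (hx i v)) ?ler_wpM2r. Qed.

Lemma tnorm_le_tsub_trans {d} {a b c : tup H d} {ca cb : C} :
  tnorm_le (tsub a b) ca -> tnorm_le (tsub b c) cb -> tnorm_le (tsub a c) (ca + cb).
Proof.
move=> hab hbc i v; rewrite /tsub -(subrKA (b i v)) mulrDl.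
by rewrite (le_trans (ler_normD _ _)) ?lerD ?hab ?hbc.
Qed.

Lemma tnorm_le_tsubxx {d} (x : tup H d) : tnorm_le (tsub x x) 0.
Proof. by move=> i v; rewrite /tsub subrr normr0 mul0r. Qed.

Lemma tnorm_le_tsubC {d} {a b : tup H d} {c : C} : tnorm_le (tsub a b) c -> tnorm_le (tsub b a) c.
Proof. by move=> hab i v; rewrite /tsub distrC; apply: hab. Qed.

Lemma tnorm_leZ {d} (a : C) {x : tup H d} {c : C} :
  tnorm_le x c -> tnorm_le (tscale a x) (`|a| * c).
Proof. by move=> hx i v; rewrite /tscale normrZ -mulrA ler_wpM2l ?hx. Qed.

Lemma tnorm_le_invZ {d} {a : C} {x : tup H d} {c : C} : 0 < a ->
  tnorm_le (tscale a x) c -> tnorm_le x (a^-1 * c).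
Proof.
move=> a0 hx i v; have := hx i v; rewrite /tscale normrZ gtr0_norm // -mulrA.
by rewrite -ler_pdivlMl.
Qed.

Lemma tnorm_le_eq {d} {a b : tup H d} {K : C} : 0 <= K ->
  (forall m : nat, tnorm_le (tsub a b) ((m.+1%:R)^-1 * K)) -> a = b.
Proof.
move=> K0 le_ab; apply/funext=> i; apply/funext=> v; apply/eqP.
rewrite -subr_eq0 -normr_eq0; apply/eqP/(@eq0_of_le_inv _ _ (K * `|v|)) => // [|m].
  by rewrite mulr_ge0.
by rewrite mulrA; apply: le_ab.
Qed.

Lemma tnorm_le_quotient {d} {F1 F D : tup H d} {tau eps ch cD : C} :
  0 < tau -> tau <= eps -> eps <= 1 -> 0 <= ch -> 0 <= cD -> tnorm_le D cD ->
  tnorm_le (tsub (tsub F1 F) (tscale tau D)) (eps * (tau * ch)) ->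
  tnorm_le (tsub F1 F) (eps * (ch + cD)) /\
  tnorm_le (tsub (tscale tau^-1 (tsub F1 F)) D) (eps * ch).
Proof.
move=> tau0 tau_eps eps1 ch0 cD0 hD hE; have eps0 := lt_le_trans tau0 tau_eps.
have tau1 := le_trans tau_eps eps1.
split=> i v; have := hE i v; rewrite /tsub /tscale => le_E.
- rewrite -[F1 i v - F i v](subrK (tau *: D i v)).
  rewrite (le_trans (ler_normD _ _)) // normrZ gtr0_norm // mulrDr mulrDl lerD //.
    by rewrite (le_trans le_E) // ler_wpM2r // ler_wpM2l ?(ltW eps0) // ler_piMl.
  by rewrite -mulrA (le_trans (ler_wpM2l (ltW tau0) (hD i v))) // ler_wpM2r ?mulr_ge0.
- rewrite -[F1 i v - F i v](subrK (tau *: D i v)) scalerDr scalerA mulVf ?gt_eqF // scale1r addrK.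
  rewrite normrZ gtr0_norm ?invr_gt0 //.
  rewrite -ler_pdivlMl ?invr_gt0 // invrK.
  by have -> : tau * (eps * ch * `|v|) = eps * (tau * ch) * `|v| by ring.
Qed.

Lemma btup0 {d} : btup (@tzero _ H d).
Proof.
move=> i; split=> [a u v|]; first by rewrite /tzero scaler0 addr0.
by exists 0; split=> // v; rewrite /tzero normr0 mul0r.
Qed.

Lemma frechet_derivZ {d r} {Om : set (tup H d)} {f : tup H d -> tup H r} {x L} (a : C) {h} :
  frechet_deriv Om f x L -> btup h -> L (tscale a h) = tscale a (L h).
Proof.
move=> [_ [L_lin _]] hh.
have tadd0 e (y : tup H e) : tadd y (@tzero _ H e) = y.
  by apply/funext=> i; apply/funext=> v; rewrite /tadd /tzero addr0.
have L0 : L (@tzero _ H d) = @tzero _ H r.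
  have := L_lin 1 _ _ btup0 btup0.
  have -> : tscale 1 (@tzero _ H d) = @tzero _ H d.
    by apply/funext=> i; apply/funext=> v; rewrite /tscale /tzero scaler0.
  rewrite tadd0 => e; apply/funext=> i; apply/funext=> v.
  move: (congr1 (fun X => X i v) e); rewrite /tadd /tscale scale1r /tzero.
  by set y := L _ i v; rewrite -{1}[y]addr0 => /addrI /esym.
by rewrite -[tscale a h]tadd0 L_lin ?L0 ?tadd0 //; apply: btup0.
Qed.

End Operators.

Section Similarities.
Context {R : realType} {H : normedModType R[i]}.
Local Notation C := R[i].
Implicit Types (s : H -> H * H) (t : H * H -> H) (S : H -> H).

Definition pair_norm (p : H * H) : C := `|p.1| + `|p.2|.

Lemma pair_norm_ge0 p : 0 <= pair_norm p.
Proof. by rewrite addr_ge0. Qed.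

Lemma sq2_le_pair_norm p : sq2 p <= pair_norm p ^+ 2.
Proof. by rewrite /sq2 /pair_norm sqrrD -addrA lerD2l lerDr mulrn_wge0 ?mulr_ge0. Qed.

Definition binv2_bound s t (M : C) : Prop :=
  (forall v, pair_norm (s v) <= M * `|v|) /\ (forall p, `|t p| <= M * pair_norm p).

Lemma binv2_bounded {s t} : binv2 s t -> exists2 M : C, 0 < M & binv2_bound s t M.
Proof.
move=> [_ [[Ms hMs] [_ [[Mt hMt] _]]]].
have le_s v : `|(s v).1| <= `|Ms| * `|v| /\ `|(s v).2| <= `|Ms| * `|v|.
  by split; apply: (@le_normM_of_sqr _ _ _ (`|v| ^+ 2)); rewrite ?exprn_ge0 //;
    apply: le_trans (hMs v); rewrite /sq2 ?lerDl ?lerDr exprn_ge0.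
have le_t p : `|t p| <= `|Mt| * pair_norm p.
  apply: (@le_normM_of_sqr _ _ _ (sq2 p)); rewrite ?pair_norm_ge0 //.
  - by rewrite addr_ge0 ?exprn_ge0.
  - exact: sq2_le_pair_norm.
exists (2 * `|Ms| + `|Mt| + 1); first by rewrite (lt_le_trans ltr01) // lerDr.
split=> [v|p].
- have [s1_le s2_le] := le_s v; rewrite /pair_norm (le_trans (lerD s1_le s2_le)) //.
  by rewrite -mulrDl ler_wpM2r // -mulr2n mulr_natl -addrA lerDl.
- by rewrite (le_trans (le_t p)) // ler_wpM2r ?pair_norm_ge0 // -addrA addrCA lerDl.
Qed.

Lemma binv2_of_bound s t (M : C) :
  (forall (a : C) u v, s (a *: u + v) = a *: s u + s v) ->
  (forall (a : C) p q, t (a *: p + q) = a *: t p + t q) ->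
  cancel s t -> cancel t s -> 0 <= M -> binv2_bound s t M -> binv2 s t.
Proof.
move=> sL tL st ts M0 [hs ht]; split=> //; split.
  exists M => v; rewrite (le_trans (sq2_le_pair_norm _)) // -exprMn.
  by rewrite ler_pXn2r ?nnegrE ?pair_norm_ge0 ?mulr_ge0.
split=> //; split=> //; exists (2 * M) => p.
have le_t : `|t p| ^+ 2 <= M ^+ 2 * pair_norm p ^+ 2.
  by rewrite -exprMn ler_pXn2r ?nnegrE ?mulr_ge0 ?pair_norm_ge0.
have -> : (2 * M) ^+ 2 * sq2 p = M ^+ 2 * (2 * (2 * sq2 p)) by ring.
rewrite (le_trans le_t) // ler_wpM2l ?exprn_ge0 //.
rewrite (le_trans (sqrrD_le (normr_ge0 p.1) (normr_ge0 p.2))) //.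
by rewrite ler_peMl ?mulr_ge0 ?addr_ge0 ?exprn_ge0 // ler1n.
Qed.

(* [shear S] is the operator matrix [[1, S], [0, 1]] on [H^(2)]. *)
Definition shear S (p : H * H) : H * H := (p.1 + S p.2, p.2).

Lemma shear_linear S (a : C) p q : linop S ->
  shear S (a *: p + q) = a *: shear S p + shear S q.
Proof.
move=> hS; case: p q => [p1 p2] [q1 q2]; rewrite /shear /= hS.
by congr (_, _); rewrite addrACA -scalerDr.
Qed.

Lemma pair_norm_shear {S} {c : C} {p} : 0 <= c -> (forall v, `|S v| <= c * `|v|) ->
  pair_norm (shear S p) <= (1 + c) * pair_norm p.
Proof.
move=> c0 hc; rewrite /pair_norm /shear /= mulrDl mul1r.
rewrite (le_trans (lerD (ler_normD _ _) (lexx _))) // addrAC lerD2l.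
by rewrite (le_trans (hc _)) // ler_wpM2l // lerDr.
Qed.

Lemma binv2_shear {s t S} {c : C} : binv2 s t -> linop S -> 0 <= c ->
  (forall v, `|S v| <= c * `|v|) ->
  binv2 (shear S \o s) (t \o shear (fun v => - S v)).
Proof.
move=> hst hS c0 hc; have [M M0 [hs ht]] := binv2_bounded hst.
have [sL [_ [tL [_ [st ts]]]]] := hst.
have hSN : linop (fun v => - S v) by move=> a u v; rewrite hS opprD scalerN.
have hcN v : `|- S v| <= c * `|v| by rewrite normrN.
apply: (@binv2_of_bound _ _ ((1 + c) * M)).
- by move=> a u v /=; rewrite sL shear_linear.
- by move=> a p q /=; rewrite shear_linear // tL.
- by move=> v /=; rewrite /shear /= addrK -surjective_pairing st.
- by move=> p /=; rewrite ts /shear /= addrNK -surjective_pairing.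
- by rewrite mulr_ge0 ?addr_ge0 ?ler01 // ltW.
- split=> [v|p] /=.
  + by rewrite -mulrA (le_trans (pair_norm_shear c0 hc)) // ler_wpM2l ?addr_ge0 ?ler01.
  + rewrite (le_trans (ht _)) // [(1 + c) * M]mulrC -mulrA ler_wpM2l ?(ltW M0) //.
    exact: (pair_norm_shear c0 hcN).
Qed.

Definition sylvester {d} (A B : tup H d) S : tup H d := fun i v => A i (S v) - S (B i v).

Lemma conj2_shear d s t S (A B : tup H d) : (forall i, linop (A i)) ->
  conj2 (shear S \o s) (t \o shear (fun v => - S v)) (blk A (@tzero _ H d) B) =
  conj2 s t (blk A (sylvester A B S) B).
Proof.
move=> hA; apply/funext=> i; apply/funext=> v.
by rewrite /conj2 /blk /shear /tzero /sylvester /= (linlawD (hA i)) addr0 addrA.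
Qed.

Lemma sylvester_scale d (A B : tup H d) (c : C) : (forall i, linop (A i)) ->
  sylvester A B (fun v => c *: v) = tscale c (tsub A B).
Proof.
move=> hA; apply/funext=> i; apply/funext=> v.
by rewrite /sylvester /tscale /tsub (linlawZ (hA i)) scalerBr.
Qed.

Lemma blk_linear d (a b c : tup H d) i (g : C) p q : btup a -> btup b -> btup c ->
  blk a b c i (g *: p + q) = g *: blk a b c i p + blk a b c i q.
Proof.
move=> ha hb hc; case: p q => [p1 p2] [q1 q2].
rewrite /blk /= (btup_linop i ha) (btup_linop i hb) (btup_linop i hc).
by congr (_, _); rewrite addrACA -scalerDr.
Qed.

Lemma conj2_blk_le {d s t} {M : C} {a b c : tup H d} {ca cb cc : C} :
  binv2_bound s t M -> 0 <= M -> 0 <= ca -> 0 <= cb -> 0 <= cc ->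
  tnorm_le a ca -> tnorm_le b cb -> tnorm_le c cc ->
  tnorm_le (conj2 s t (blk a b c)) (M * (M * (ca + cb + cc))).
Proof.
move=> [hs ht] M0 ca0 cb0 cc0 ha hb hc i v; rewrite /conj2 /blk.
rewrite (le_trans (ht _)) // -mulrA ler_wpM2l // /pair_norm /=.
rewrite (le_trans (lerD (ler_normD _ _) (lexx _))) //.
rewrite (le_trans (lerD (lerD (ha i _) (hb i _)) (hc i _))) //.
apply: (@le_trans _ _ ((ca + cb + cc) * pair_norm (s v))).
  rewrite !mulrDl; do 2?apply: lerD; apply: ler_wpM2l => //;
    by rewrite /pair_norm ?lerDl ?lerDr.
by rewrite [M * _]mulrC -mulrA ler_wpM2l ?addr_ge0.
Qed.

Lemma conj2_blkB {d s t} {a b c a' b' c' : tup H d} : binv2 s t ->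
  tsub (conj2 s t (blk a b c)) (conj2 s t (blk a' b' c')) =
  conj2 s t (blk (tsub a a') (tsub b b') (tsub c c')).
Proof.
move=> [_ [_ [tL _]]]; apply/funext=> i; apply/funext=> v.
rewrite /tsub /conj2 -(linlawB tL); congr t.
by apply/pair_equal_spec; split=> //=; rewrite addrACA -opprD.
Qed.

Lemma conj2_blk_dist_le {d s t} {M : C} {a b c a' b' c' : tup H d} {ca cb cc : C} :
  binv2 s t -> binv2_bound s t M -> 0 <= M -> 0 <= ca -> 0 <= cb -> 0 <= cc ->
  tnorm_le (tsub a a') ca -> tnorm_le (tsub b b') cb -> tnorm_le (tsub c c') cc ->
  tnorm_le (tsub (conj2 s t (blk a b c)) (conj2 s t (blk a' b' c'))) (M * (M * (ca + cb + cc))).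
Proof. by move=> hst; rewrite conj2_blkB //; apply: conj2_blk_le. Qed.

Lemma conj2_btup {d s t} {a b c : tup H d} : binv2 s t -> btup a -> btup b -> btup c ->
  btup (conj2 s t (blk a b c)).
Proof.
move=> hst ha hb hc; have [M M0 hM] := binv2_bounded hst.
have [ca ca0 hca] := btup_bound ha; have [cb cb0 hcb] := btup_bound hb.
have [cc cc0 hcc] := btup_bound hc; have [sL [_ [tL _]]] := hst.
move=> i; split=> [g u v|]; first by rewrite /conj2 sL blk_linear // tL.
exists (M * (M * (ca + cb + cc))); split; last by apply: conj2_blk_le => //; apply: ltW.
by rewrite !mulr_ge0 ?addr_ge0 // ltW.
Qed.

Lemma conj2_inj {d s t} {X Y : 'I_d -> H * H -> H * H} : binv2 s t ->
  conj2 s t X = conj2 s t Y -> X = Y.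
Proof.
move=> [_ [_ [_ [_ [_ ts]]]]] eXY; apply/funext=> i; apply/funext=> p.
by move: (congr1 (fun Z => s (Z i (t p))) eXY); rewrite /conj2 !ts.
Qed.

Lemma conj2_blk_corner_le {d s t} {M K : C} {a b c : tup H d} :
  binv2 s t -> binv2_bound s t M -> 0 <= M -> 0 <= K -> btup a ->
  tnorm_le (conj2 s t (blk a b c)) K -> tnorm_le b (M * K * M).
Proof.
move=> [_ [_ [_ [_ [_ ts]]]]] [hs ht] M0 K0 ha hK i y.
have -> : b i y = (s (conj2 s t (blk a b c) i (t (0, y)))).1.
  by rewrite /conj2 !ts /blk /= (linlaw0 (btup_linop i ha)) add0r.
have le_y : `|t (0, y)| <= M * `|y|.
  by rewrite (le_trans (ht _)) // /pair_norm /= normr0 add0r.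
set X := conj2 s t (blk a b c) i (t (0, y)).
apply: (@le_trans _ _ (pair_norm (s X))); first by rewrite /pair_norm lerDl.
rewrite (le_trans (hs _)) // -!mulrA ler_wpM2l // (le_trans (hK _ _)) //.
by rewrite ler_wpM2l.
Qed.

End Similarities.

Section DirectSums.
Context {R : realType} {H : normedModType R[i]}.
Local Notation C := R[i].

Definition dsum_closed {d} (P : set (tup H d)) : Prop :=
  forall (l : option nat) (x : nat -> tup H d), (forall n, idx l n -> P (x n)) ->
  exists (u : H -> nat -> H) (w : (nat -> H) -> H),
    unitary_l l u /\ cancel u w /\ (forall z, in_Hl l z -> u (w z) = z) /\
    P (fun i v => w (dsum l x i (u v))).

Definition pair_seq (p : H * H) : nat -> H :=
  fun n => if n is 0 then p.1 else if n is 1 then p.2 else 0.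

Definition single (n : nat) (v : H) : nat -> H := fun m => if m == n then v else 0.

Lemma series_pair_seq p : series_to (fun n => `|pair_seq p n| ^+ 2) (sq2 p).
Proof.
have -> : sq2 p = \sum_(0 <= k < 2) `|pair_seq p k| ^+ 2.
  by rewrite big_nat_recr //= big_nat1.
by apply: series_to_eventually0 => -[|[|n]] // _; rewrite normr0 expr0n.
Qed.

Lemma in_Hl_pair_seq p : in_Hl (Some 1%N) (pair_seq p).
Proof. by split=> [[|[|n]]|] //; exists (sq2 p); apply: series_pair_seq. Qed.

Lemma series_single n v : series_to (fun m => `|single n v m| ^+ 2) (`|v| ^+ 2).
Proof.
have -> : `|v| ^+ 2 = \sum_(0 <= k < n.+1) `|single n v k| ^+ 2.
  rewrite big_nat_recr //= big1_seq ?add0r /single ?eqxx // => m.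
  by rewrite mem_index_iota => /andP[_ /andP[_ /ltn_eqF ->]]; rewrite normr0 expr0n.
apply: series_to_eventually0 => m le_nm.
by rewrite /single (gtn_eqF le_nm) normr0 expr0n.
Qed.

Lemma in_Hl_single n v : in_Hl None (single n v).
Proof. by split=> //; exists (`|v| ^+ 2); apply: series_single. Qed.

Section Unitary.
Context {l : option nat} {u : H -> nat -> H} {w : (nat -> H) -> H}.
Hypotheses (u_unitary : unitary_l l u) (uK : cancel u w)
  (wK : forall z, in_Hl l z -> u (w z) = z).

Lemma unitary_l_inv_sqnorm {z L} : in_Hl l z ->
  series_to (fun n => `|z n| ^+ 2) L -> `|w z| ^+ 2 = L.
Proof.
have [_ [_ [uN _]]] := u_unitary; move=> lz hL.
by apply: series_to_unique (uN (w z)) _; rewrite wK.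
Qed.

Lemma unitary_l_inv_linear (a : C) p q : in_Hl l p -> in_Hl l q ->
  in_Hl l (fun n => a *: p n + q n) -> w (fun n => a *: p n + q n) = a *: w p + w q.
Proof.
have [uL _] := u_unitary; move=> lp lq lpq.
by apply: (can_inj uK); rewrite uL !wK.
Qed.

End Unitary.

Lemma dsum_closed_blk0 {d} {P : set (tup H d)} {A B : tup H d} :
  dsum_closed P -> P A -> P B ->
  exists s t, binv2 s t /\ P (conj2 s t (blk A (@tzero _ H d) B)).
Proof.
move=> P_dsum PA PB.
have [u [w [u_unitary [uK [wK PD]]]]] :=
  P_dsum (Some 1%N) (fun n => if n is 0 then A else B) (fun n _ => if n is 0 then PA else PB).
have [uL [uH [uN _]]] := u_unitary.
pose s v := (u v 0%N, u v 1%N); pose t p := w (pair_seq p).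
have u_pair v : pair_seq (s v) = u v.
  by apply/funext=> -[|[|n]] //=; case: (uH v) => /(_ n.+2) ->.
have t_norm p : `|t p| ^+ 2 = sq2 p.
  by rewrite /t (unitary_l_inv_sqnorm u_unitary wK (in_Hl_pair_seq p) (series_pair_seq p)).
have s_norm v : sq2 (s v) = `|v| ^+ 2.
  by apply: series_to_unique (series_pair_seq _) _; rewrite u_pair; apply: uN.
exists s, t; split; last first.
  suff -> : conj2 s t (blk A (@tzero _ H d) B) =
    (fun i v => w (dsum (Some 1%N) (fun n => if n is 0 then A else B) i (u v))) by [].
  apply/funext=> i; apply/funext=> v; rewrite /conj2 /t; congr w.
  by apply/funext=> -[|[|n]]; rewrite /pair_seq /dsum /blk /tzero //= addr0.
split; [|split; [|split; [|split; [|split]]]].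
- by move=> a v1 v2; rewrite /s uL.
- by exists 1 => v; rewrite s_norm expr1n mul1r.
- move=> a p q; have e : pair_seq (a *: p + q) = (fun n => a *: pair_seq p n + pair_seq q n).
    by apply/funext=> -[|[|n]] //=; rewrite scaler0 addr0.
  by rewrite /t e (unitary_l_inv_linear u_unitary uK wK) // -?e; apply: in_Hl_pair_seq.
- by exists 1 => p; rewrite t_norm expr1n mul1r.
- by move=> v; rewrite /t u_pair uK.
- by move=> p; rewrite /s /t wK; [case: p | apply: in_Hl_pair_seq].
Qed.

End DirectSums.

Section NCFunctions.
Context {R : realType} {H : normedModType R[i]} {d r : nat}.
Local Notation C := R[i].
Variables (Om : set (tup H d)) (f : tup H d -> tup H r).
Hypotheses (Om_btup : forall x, Om x -> btup x) (f_btup : forall x, Om x -> btup (f x))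
  (f_nc : nc_function Om f).

Lemma nc_sylvester {s t S} {c : C} {A B : tup H d} :
  Om A -> Om B -> binv2 s t -> linop S -> 0 <= c -> (forall v, `|S v| <= c * `|v|) ->
  Om (conj2 s t (blk A (sylvester A B S) B)) ->
  f (conj2 s t (blk A (sylvester A B S) B)) =
  conj2 s t (blk (f A) (sylvester (f A) (f B) S) (f B)).
Proof.
move=> OA OB hst hS c0 hc.
rewrite -conj2_shear => [OD|i]; last exact: btup_linop (Om_btup _ OA).
rewrite -conj2_shear => [|i]; last exact: btup_linop (f_btup _ OA).
by apply: f_nc => //; apply: binv2_shear hS c0 hc.
Qed.

Lemma nc_sylvester_scale {s t} {c : C} {A B : tup H d} :
  Om A -> Om B -> binv2 s t -> Om (conj2 s t (blk A (tscale c (tsub A B)) B)) ->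
  f (conj2 s t (blk A (tscale c (tsub A B)) B)) =
  conj2 s t (blk (f A) (tscale c (tsub (f A) (f B))) (f B)).
Proof.
move=> OA OB hst.
have hS : linop (fun v : H => c *: v) by move=> a u v; rewrite scalerDr !scalerA mulrC.
rewrite -!sylvester_scale => [|i|i];
  [|exact: btup_linop (f_btup _ OA) | exact: btup_linop (Om_btup _ OA)].
by apply: nc_sylvester hS (normr_ge0 c) _ => // v; rewrite normrZ.
Qed.

Section Exhaustion.
Context {P : set (tup H d)}.
Hypotheses (P_Om : P `<=` Om) (P_dsum : dsum_closed P).

Lemma nc_intertwine {S} {c : C} {A B : tup H d} :
  P A -> P B -> linop S -> 0 <= c -> (forall v, `|S v| <= c * `|v|) ->
  (forall i v, A i (S v) = S (B i v)) -> forall i v, f A i (S v) = S (f B i v).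
Proof.
move=> PA PB hS c0 hc AS_SB i y.
have [s [t [hst PD]]] := dsum_closed_blk0 P_dsum PA PB.
have sylv0 : sylvester A B S = @tzero _ H d.
  by apply/funext=> j; apply/funext=> v; rewrite /sylvester AS_SB subrr.
have := nc_sylvester (P_Om _ PA) (P_Om _ PB) hst hS c0 hc.
rewrite sylv0 (f_nc _ _ _ _ (P_Om _ PA) (P_Om _ PB) hst (P_Om _ PD)).
move=> /(_ (P_Om _ PD)) /(conj2_inj hst).
move=> /(congr1 (fun X => (X i (0, y)).1)) /= /addrI /esym /eqP.
by rewrite subr_eq0 => /eqP.
Qed.

Lemma nc_bounded_on : exists2 M : C, 0 <= M & forall z, P z -> tnorm_le (f z) M.
Proof.
apply: contrapT => unbounded.
have /choice[z hz] : forall n : nat, exists z, P z /\ ~ tnorm_le (f z) n%:R.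
  move=> n; apply: contrapT => bdd; apply: unbounded; exists n%:R => // z Pz.
  by apply: contrapT => nz; apply: bdd; exists z.
have [u [w [u_unitary [uK [wK PZ]]]]] := P_dsum None z (fun n _ => (hz n).1).
set Z := fun i v => w (dsum None z i (u v)) in PZ.
have [M M0 hM] := btup_bound (f_btup _ (P_Om _ PZ)).
have [n le_Mn] := exists_nat_ge (ltW M0).
apply: (hz n).2 => i y.
pose S v := w (single n v).
have S_iso v : `|S v| = `|v|.
  apply/eqP; rewrite -(eqrXn2 (_ : (0 < 2)%N)) ?normr_ge0 //; apply/eqP.
  by rewrite /S (unitary_l_inv_sqnorm u_unitary wK (in_Hl_single n v) (series_single n v)).
have S_lin : linop S.
  move=> a v1 v2; have e : single n (a *: v1 + v2) = (fun m => a *: single n v1 m + single n v2 m).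
    by apply/funext=> m; rewrite /single; case: eqP; rewrite ?scaler0 ?addr0.
  by rewrite /S e (unitary_l_inv_linear u_unitary uK wK) // -?e; apply: in_Hl_single.
have ZS j v' : Z j (S v') = S (z n j v').
  rewrite /Z /S wK; last exact: in_Hl_single.
  congr w; apply/funext=> m; rewrite /dsum /single /=; case: eqP => [->|_] //.
  exact: (linlaw0 (btup_linop j (Om_btup _ (P_Om _ (hz m).1)))).
have S_le v' : `|S v'| <= 1 * `|v'| by rewrite S_iso mul1r.
rewrite -S_iso -(nc_intertwine PZ (hz n).1 S_lin ler01 S_le ZS).
by rewrite (le_trans (hM i (S y))) // S_iso ler_wpM2r.
Qed.

End Exhaustion.

Hypothesis Om_dom : nc_domain Om.

Lemma nc_domain_diag2 {x} : Om x ->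
  exists s t, binv2 s t /\ Om (conj2 s t (blk x (@tzero _ H d) x)).
Proof.
have [_ [Omk [Omk_sub [Om_eq [_ [_ [_ Omk_dsum]]]]]]] := Om_dom.
move=> Ox; have [k _ Px] : (\bigcup_k Omk k) x by rewrite -Om_eq.
have [s [t [hst PD]]] := dsum_closed_blk0 (Omk_dsum k) Px Px.
by exists s, t; split; last exact: Omk_sub PD.
Qed.

Lemma nc_locally_bounded {x} : Om x -> exists2 e : C, 0 < e & exists2 M : C, 0 <= M &
  forall y, btup y -> tnorm_le (tsub y x) e -> Om y /\ tnorm_le (f y) M.
Proof.
have [_ [Omk [Omk_sub [Om_eq [Omk_int [_ [_ Omk_dsum]]]]]]] := Om_dom.
move=> Ox; have [k _ Px] : (\bigcup_k Omk k) x by rewrite -Om_eq.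
have [_ [e [e0 x_nbhd]]] := Omk_int k x Px.
have [M M0 hM] := nc_bounded_on (Omk_sub k.+1) (Omk_dsum k.+1).
exists e => //; exists M => // y hy hyx; have Py := x_nbhd y hy hyx.
by split; [exact: Omk_sub Py | exact: hM].
Qed.

Lemma nc_lipschitz {Y} : Om Y -> exists2 K : C, 0 <= K & exists2 eta : C, 0 < eta &
  forall Y' (c : C), Om Y' -> 0 < c -> c <= eta -> tnorm_le (tsub Y' Y) c ->
  tnorm_le (tsub (f Y') (f Y)) (K * c).
Proof.
move=> OY; have [s [t [hst OD]]] := nc_domain_diag2 OY.
have [M M0 hM] := binv2_bounded hst.
have [e e0 [M1 M1_0 D_nbhd]] := nc_locally_bounded OD.
have k0 : 0 < M * M by rewrite mulr_gt0.
exists (2 * (M * M) * (M * M) * M1 / e).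
  by rewrite !mulr_ge0 ?invr_ge0 ?ler0n ?(ltW M0) ?(ltW e0).
exists (e / (2 * (M * M))); first by rewrite divr_gt0 ?mulr_gt0.
move=> Y' c OY' c0 c_eta hY'.
set lam := e / (2 * (M * M) * c).
have lam0 : 0 < lam by rewrite divr_gt0 ?mulr_gt0.
set Bt := conj2 s t (blk Y' (tscale lam (tsub Y' Y)) Y).
have hC : tnorm_le (tsub (tscale lam (tsub Y' Y)) (@tzero _ H d)) (lam * c).
  have := tnorm_leZ lam hY'; rewrite gtr0_norm // => le_lam i v.
  by rewrite {1}/tsub /tzero subr0; apply: le_lam.
have hBt : tnorm_le (tsub Bt (conj2 s t (blk Y (@tzero _ H d) Y))) e.
  apply: (tnorm_le_trans (conj2_blk_dist_le hst hM (ltW M0) (ltW c0) (ltW (mulr_gt0 lam0 c0))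
    (lexx 0) hY' hC (tnorm_le_tsubxx Y))).
  rewrite addr0 mulrA mulrDr.
  have -> : M * M * (lam * c) = e / 2 by rewrite /lam; field; rewrite ?gt_eqF ?mulr_gt0.
  rewrite [X in _ <= X](splitr e) lerD2r -ler_pdivlMl //.
  suff -> : (M * M)^-1 * (e / 2) = e / (2 * (M * M)) by [].
  by field; rewrite gt_eqF.
have bBt : btup Bt.
  have bY' := Om_btup _ OY'; have bY := Om_btup _ OY.
  exact: conj2_btup hst bY' (btupZ _ (btupB bY' bY)) bY.
have [OBt fBt_le] := D_nbhd Bt bBt hBt.
rewrite /Bt nc_sylvester_scale // in fBt_le.
have := conj2_blk_corner_le hst hM (ltW M0) M1_0 (f_btup _ OY') fBt_le.
move=> /(tnorm_le_invZ lam0) /tnorm_le_trans; apply.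
rewrite le_eqVlt; apply/orP; left; apply/eqP; rewrite /lam; field.
by rewrite ?gt_eqF ?mulr_gt0.
Qed.

Lemma nc_upper_difference {x h s t} {tau : C} : 0 < tau -> Om x -> Om (tadd x (tscale tau h)) ->
  binv2 s t -> Om (conj2 s t (blk (tadd x (tscale tau h)) h x)) ->
  f (conj2 s t (blk (tadd x (tscale tau h)) h x)) =
  conj2 s t (blk (f (tadd x (tscale tau h)))
    (tscale tau^-1 (tsub (f (tadd x (tscale tau h))) (f x))) (f x)).
Proof.
move=> tau0 Ox Oxt hst; set xt := tadd x (tscale tau h).
have e_h : tscale tau^-1 (tsub xt x) = h.
  apply/funext=> i; apply/funext=> v; rewrite /tscale /tsub /xt /tadd addrC addKr.
  by rewrite scalerA mulVf ?gt_eqF // scale1r.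
by rewrite -{1 2}e_h => OYt; rewrite nc_sylvester_scale.
Qed.
Lemma nc_upper_estimate {x h Df s t} :
  frechet_deriv Om f x Df -> Om x -> btup h -> binv2 s t -> Om (conj2 s t (blk x h x)) ->
  exists2 K : C, 0 <= K & forall eps : C, 0 < eps -> eps <= 1 ->
    tnorm_le (tsub (f (conj2 s t (blk x h x))) (conj2 s t (blk (f x) (Df h) (f x)))) (eps * K).
Proof.
move=> Dfx Ox hh hst OY; set Y := conj2 s t (blk x h x) in OY *.
have [ch ch0 hch] := btup_bound hh; have [cD cD0 hcD] := btup_bound (Dfx.1 h hh).
have [M M0 hM] := binv2_bounded hst.
have [ex ex0 [? _ x_nbhd]] := nc_locally_bounded Ox.
have [eY eY0 [? _ Y_nbhd]] := nc_locally_bounded OY.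
have [K K0 [eta eta0 lipY]] := nc_lipschitz OY.
set c0 := M * (M * ch); have c0_gt0 : 0 < c0 by rewrite !mulr_gt0.
exists (K * c0 + M * (M * (ch + cD + ch))) => [|eps eps0 eps1].
  by rewrite addr_ge0 ?mulr_ge0 ?addr_ge0 ?(ltW M0) ?(ltW ch0) ?(ltW cD0) ?(ltW c0_gt0).
have [del [del0 Dfx_eps]] := Dfx.2.2.2 eps eps0.
have [n [tch_del [tch_ex [tc0_eY [tc0_eta t_eps]]]]] := filter_ex
  (filterI (near_inv_mul_lt (ltW ch0) del0) (filterI (near_inv_mul_lt (ltW ch0) ex0)
  (filterI (near_inv_mul_lt (ltW c0_gt0) eY0) (filterI (near_inv_mul_lt (ltW c0_gt0) eta0)
  (near_inv_mul_lt ler01 eps0))))).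
set tau := (n.+1%:R)^-1 in tch_del tch_ex tc0_eY tc0_eta t_eps; rewrite mulr1 in t_eps.
have tau0 : 0 < tau by rewrite invr_gt0 ltr0Sn.
set xt := tadd x (tscale tau h).
have h_tau : tnorm_le (tscale tau h) (tau * ch) by move: (tnorm_leZ tau hch); rewrite gtr0_norm.
have hxt : tnorm_le (tsub xt x) (tau * ch).
  by move=> i v; rewrite /tsub /xt /tadd addrC addKr; apply: h_tau.
have [Oxt _] := x_nbhd xt (btupD (Om_btup _ Ox) (btupZ tau hh)) (tnorm_le_trans hxt (ltW tch_ex)).
set Yt := conj2 s t (blk xt h x).
have hYt : tnorm_le (tsub Yt Y) (tau * c0).
  apply: (tnorm_le_trans (conj2_blk_dist_le hst hM (ltW M0) (mulr_ge0 (ltW tau0) (ltW ch0))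
    (lexx 0) (lexx 0) hxt (tnorm_le_tsubxx h) (tnorm_le_tsubxx x))).
  by rewrite /c0 !addr0 le_eqVlt; apply/orP; left; apply/eqP; ring.
have [OYt _] := Y_nbhd Yt (conj2_btup hst (Om_btup _ Oxt) hh (Om_btup _ Ox))
  (tnorm_le_trans hYt (ltW tc0_eY)).
have hE : tnorm_le (tsub (tsub (f xt) (f x)) (tscale tau (Df h))) (eps * (tau * ch)).
  rewrite -(frechet_derivZ tau Dfx hh); apply: Dfx_eps => //; first exact: btupZ.
  by rewrite mulr_ge0 ?ltW.
have [hF1 hQ] := tnorm_le_quotient tau0 (ltW t_eps) eps1 (ltW ch0) (ltW cD0) hcD hE.
rewrite mulrDr; apply: (tnorm_le_tsub_trans (b := f Yt)).
- apply/tnorm_le_tsubC/(tnorm_le_trans (lipY Yt _ OYt (mulr_gt0 tau0 c0_gt0) (ltW tc0_eta) hYt)).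
  by rewrite mulrCA ler_wpM2r ?(mulr_ge0 K0 (ltW c0_gt0)) ?(ltW t_eps).
- rewrite /Yt nc_upper_difference //.
  apply: (tnorm_le_trans (conj2_blk_dist_le hst hM (ltW M0) _ _ (lexx 0) hF1 hQ
    (tnorm_le_tsubxx (f x)))).
  + by rewrite mulr_ge0 ?addr_ge0 ?(ltW eps0) ?(ltW ch0) ?(ltW cD0).
  + by rewrite mulr_ge0 ?(ltW eps0) ?(ltW ch0).
  + by rewrite le_eqVlt; apply/orP; left; apply/eqP; ring.
Qed.

End NCFunctions.

Theorem proposition3p3 (R : realType) (H : completeNormedModType R[i])
  (ip : H -> H -> R[i]) (d r : nat)
  (Om : set (tup H d)) (f : tup H d -> tup H r)
  (Df : tup H d -> tup H r)
  (x h : tup H d) (s : H -> H * H) (t : H * H -> H) :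
  inner_product ip -> separable_space H -> infinite_dimensional ip ->
  nc_domain Om ->
  (forall y, Om y -> btup (f y)) ->
  nc_function Om f ->
  frechet_deriv Om f x Df ->
  Om x -> btup h -> binv2 s t ->
  Om (conj2 s t (blk x h x)) ->
  f (conj2 s t (blk x h x)) = conj2 s t (blk (f x) (Df h) (f x)).
Proof.
move=> _ _ _ Om_dom f_btup f_nc Dfx Ox hh hst OY.
have [K K0 estimate] := nc_upper_estimate _ _ Om_dom.1 f_btup f_nc Om_dom Dfx Ox hh hst OY.
apply: (tnorm_le_eq K0) => m; apply: estimate; first by rewrite invr_gt0 ltr0Sn.
by rewrite invf_le1 ?ltr0Sn // ler1n.
Qed.
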